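(* Let $G$ be any of the calculi $\mathbf{GE},\mathbf{GM},\mathbf{GMC},\mathbf{GEN},\mathbf{GMN},\mathbf{GK},\mathbf{GCE},\mathbf{GCM},\mathbf{GCMC},\mathbf{GCEN},\mathbf{GCMN},\mathbf{GCK},\mathbf{GCKID},\mathbf{GCKCEM},\mathbf{GCKCEMID}$. If $G$ has the modal uniform Lyndon interpolation property (MULIP), then $G$ has ULIP. Likewise, if $G$ has the modal uniform interpolation property (MUIP), then $G$ has UIP.
   Context: Formulas: atoms, $\bot$, $\wedge,\vee,\to$ and unary $\Box$ (for $\mathbf{GE},\dots,\mathbf{GK}$) or binary $\triangleright$ (for the calculi named $\mathbf{GC}\dots$). Weight: $w(\bot)=w(p)=0$, $w(A\odot B)=w(A)+w(B)+1$ for $\odot\in\{\wedge,\vee,\to,\triangleright\}$, $w(\Box A)=w(A)+1$; the weight of a sequent is the sum of the weights of its formulas; $S$ is lower than $T$ if its weight is smaller. Positive/negative variables: $V^+(p)=\{p\}$, $V^-(p)=\varnothing$; $V^\pm(\bot)=\varnothing$; $V^\pm(\phi\odot\psi)=V^\pm(\phi)\cup V^\pm(\psi)$ for $\odot\in\{\wedge,\vee\}$; $V^+(\phi\to\psi)=V^-(\phi)\cup V^+(\psi)$, $V^-(\phi\to\psi)=V^+(\phi)\cup V^-(\psi)$; $V^\pm(\Box\phi)=V^\pm(\phi)$; $V^+(\phi\triangleright\psi)=V^-(\phi)\cup V^+(\psi)$, $V^-(\phi\triangleright\psi)=V^+(\phi)\cup V^-(\psi)$; $V=V^+\cup V^-$;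 $p^\circ$-free means $p\notin V^\circ$, $\diamond$ is the sign opposite to $\circ\in\{+,-\}$. For $S=\Gamma\Rightarrow\Delta$: $V^+(S)=\bigcup_{\gamma\in\Gamma}V^-(\gamma)\cup\bigcup_{\delta\in\Delta}V^+(\delta)$, $V^-(S)$ dually; $(\Gamma\Rightarrow\Delta)\cdot(\Pi\Rightarrow\Lambda)=(\Gamma,\Pi\Rightarrow\Delta,\Lambda)$. Calculi: $\mathbf{G3W}$ has axioms $\Gamma,p\Rightarrow p,\Delta$ ($p$ atomic), $\Gamma,\bot\Rightarrow\Delta$, the rules $L\wedge$ (from $\Gamma,\phi,\psi\Rightarrow\Delta$ infer $\Gamma,\phi\wedge\psi\Rightarrow\Delta$), $R\wedge$ (from $\Gamma\Rightarrow\phi,\Delta$, $\Gamma\Rightarrow\psi,\Delta$ infer $\Gamma\Rightarrow\phi\wedge\psi,\Delta$), $L\vee$ (from $\Gamma,\phi\Rightarrow\Delta$, $\Gamma,\psi\Rightarrow\Delta$ infer $\Gamma,\phi\vee\psi\Rightarrow\Delta$), $R\vee$ (from $\Gamma\Rightarrow\phi,\psi,\Delta$ infer $\Gamma\Rightarrow\phi\vee\psi,\Delta$), $L\to$ (from $\Gamma\Rightarrow\phi,\Delta$, $\Gamma,\psi\Rightarrow\Delta$ infer $\Gamma,\phi\to\psi\Rightarrow\Delta$), $R\to$ (from $\Gamma,\phi\Rightarrow\psi,\Delta$ infer $\Gamma\Rightarrow\phi\to\psi,\Delta$), and left/right weakening. ''$\alpha\Leftrightarrow\beta$'' as a premise abbreviates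 $\alpha\Rightarrow\beta$ and $\beta\Rightarrow\alpha$. Modal rules: $(E)$ from $\phi\Leftrightarrow\psi$ infer $\Box\phi\Rightarrow\Box\psi$; $(M)$ from $\phi\Rightarrow\psi$ infer $\Box\phi\Rightarrow\Box\psi$; $(MC)$ ($n\ge1$) from $\phi_1,\dots,\phi_n\Rightarrow\psi$ infer $\Box\phi_1,\dots,\Box\phi_n\Rightarrow\Box\psi$; $(N)$ from $\Rightarrow\psi$ infer $\Rightarrow\Box\psi$. Conditional rules: $(CE)$ from $\phi_0\Leftrightarrow\phi_1$, $\psi_0\Leftrightarrow\psi_1$ infer $\phi_1\triangleright\psi_1\Rightarrow\phi_0\triangleright\psi_0$; $(CM)$ from $\phi_0\Leftrightarrow\phi_1$, $\psi_1\Rightarrow\psi_0$ infer the same; $(CMC)$ ($n\ge1$) from $\phi_0\Leftrightarrow\phi_i$ ($1\le i\le n$), $\psi_1,\dots,\psi_n\Rightarrow\psi_0$ infer $\phi_1\triangleright\psi_1,\dots,\phi_n\triangleright\psi_n\Rightarrow\phi_0\triangleright\psi_0$; $(CN)$ from $\Rightarrow\psi_0$ infer $\Rightarrow\phi_0\triangleright\psi_0$; $(CKID)$ (finite possibly empty $I$) from $\phi_0\Leftrightarrow\phi_i$ ($i\in I$), $\phi_0,\{\psi_i\}_{i\in I}\Rightarrow\psi_0$ infer $\{\phi_i\triangleright\psi_i\}_{i\in I}\Rightarrow\phi_0\triangleright\psi_0$; $(CKCEM)$ from $\phi_0\Leftrightarrow\phi_r$ ($r\in I\cup J$), $\{\psi_i\}_{i\in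 I}\Rightarrow\psi_0,\{\psi_j\}_{j\in J}$ infer $\{\phi_i\triangleright\psi_i\}_{i\in I}\Rightarrow\phi_0\triangleright\psi_0,\{\phi_j\triangleright\psi_j\}_{j\in J}$; $(CKCEMID)$ as $(CKCEM)$ with $\phi_0$ added to the antecedent of the last premise. $\mathbf{GE},\mathbf{GM},\mathbf{GMC}$ = $\mathbf{G3W}+(E),(M),(MC)$; $\mathbf{GEN},\mathbf{GMN},\mathbf{GK}$ = these $+(N)$; $\mathbf{GCE},\mathbf{GCM},\mathbf{GCMC},\mathbf{GCKID},\mathbf{GCKCEM},\mathbf{GCKCEMID}$ = $\mathbf{G3W}+(CE),(CM),(CMC),(CKID),(CKCEM),(CKCEMID)$; $\mathbf{GCEN},\mathbf{GCMN},\mathbf{GCK}$ = $\mathbf{GCE},\mathbf{GCM},\mathbf{GCMC}+(CN)$. The modal/conditional rules of $G$ (set $\mathcal{M}$) are its rules other than the axioms and the rules of $\mathbf{G3W}$. Interpolants: for a set $\mathcal{R}$ of rules of $G$, a uniform $\forall^\circ_p$-interpolant of $S$ w.r.t. $\mathcal{R}$ is a $p^\circ$-free formula $\theta$ with $V^\dagger(\theta)\subseteq V^\dagger(S)$ for both $\dagger$, $G\vdash S\cdot(\theta\Rightarrow)$, and such that for every $\Gamma\Rightarrow\Delta$ with $p\notin V^\diamond(\Gamma\Rightarrow\Delta)$, if $S\cdot(\Gamma\Rightarrow\Delta)$ has a $G$-derivation whose last inference is an instance of a rule in $\mathcal{R}$ then $G\vdash\Gamma\Rightarrow\theta,\Delta$.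 A uniform $\forall^\circ_p$-interpolant of $S$ (in $G$) is the same with the last condition replaced by: $G\vdash S\cdot(\Gamma\Rightarrow\Delta)$ implies $G\vdash\Gamma\Rightarrow\theta,\Delta$. $G$ has ULIP if every $S,p,\circ$ admits a uniform $\forall^\circ_p$-interpolant. $\mathcal{U}^\circ_p(S)$: every sequent lower than $S$ has a uniform $\forall^\circ_p$-interpolant in $G$. $G$ has MULIP if for every $S,p,\circ$ there is a formula $\theta$ such that, if $\mathcal{U}^\circ_p(S)$ holds, then $\theta$ is a uniform $\forall^\circ_p$-interpolant of $S$ w.r.t. $\mathcal{M}$. UIP and MUIP are defined identically with all polarities dropped ($\theta$ $p$-free, $V(\theta)\subseteq V(S)$, $\Gamma\Rightarrow\Delta$ $p$-free, $\mathcal{U}_p(S)$ accordingly). *)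

From Stdlib Require Import List Permutation.
Import ListNotations.

Inductive formula : Type :=
| Var (n : nat)
| Bot
| And (a b : formula)
| Or (a b : formula)
| Imp (a b : formula)
| Box (a : formula)
| Cond (a b : formula).

Fixpoint fweight (f : formula) : nat :=
  match f with
  | Var _ | Bot => 0
  | And a b | Or a b | Imp a b | Cond a b => fweight a + fweight b + 1
  | Box a => fweight a + 1
  end.

(* A sequent Gamma => Delta: antecedent and succedent multisets,
   represented by lists and always considered up to permutation. *)
Definition sequent : Type := (list formula * list formula)%type.

Definition lweight (l : list formula) : nat := fold_right (fun f n => fweight f + n) 0 l.
Definition sweight (S : sequent) : nat := lweight (fst S) + lweight (snd S).

Definition seq_cat (S T : sequent) : sequent := (fst S ++ fst T, snd S ++ snd T).

Definition seq_perm (S T : sequent) : Prop :=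
  Permutation (fst S) (fst T) /\ Permutation (snd S) (snd T).

Inductive sign : Type := Pos | Neg.
Definition opp (s : sign) : sign := match s with Pos => Neg | Neg => Pos end.

Fixpoint vars (s : sign) (f : formula) : list nat :=
  match f with
  | Var n => match s with Pos => [n] | Neg => [] end
  | Bot => []
  | And a b | Or a b => vars s a ++ vars s b
  | Imp a b | Cond a b => vars (opp s) a ++ vars s b
  | Box a => vars s a
  end.

Definition allvars (f : formula) : list nat := vars Pos f ++ vars Neg f.

Definition svars (s : sign) (S : sequent) : list nat :=
  flat_map (vars (opp s)) (fst S) ++ flat_map (vars s) (snd S).

Definition sallvars (S : sequent) : list nat := svars Pos S ++ svars Neg S.

Inductive rule_name : Type :=
| RAx | RAxBot | RLAnd | RRAnd | RLOr | RROr | RLImp | RRImp | RLW | RRW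
| RE | RM | RMC | RN
| RCE | RCM | RCMC | RCN | RCKID | RCKCEM | RCKCEMID.

Definition cnd (c : formula * formula) : formula := Cond (fst c) (snd c).

Definition equivs (a0 : formula) (l : list (formula * formula)) : list sequent :=
  flat_map (fun c => [([a0], [fst c]); ([fst c], [a0])]) l.

Inductive inst0 : rule_name -> list sequent -> sequent -> Prop :=
| i_ax G D n : inst0 RAx [] (Var n :: G, Var n :: D)
| i_axbot G D : inst0 RAxBot [] (Bot :: G, D)
| i_land G D a b : inst0 RLAnd [(a :: b :: G, D)] (And a b :: G, D)
| i_rand G D a b : inst0 RRAnd [(G, a :: D); (G, b :: D)] (G, And a b :: D)
| i_lor G D a b : inst0 RLOr [(a :: G, D); (b :: G, D)] (Or a b :: G, D)
| i_ror G D a b : inst0 RROr [(G, a :: b :: D)] (G, Or a b :: D)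
| i_limp G D a b : inst0 RLImp [(G, a :: D); (b :: G, D)] (Imp a b :: G, D)
| i_rimp G D a b : inst0 RRImp [(a :: G, b :: D)] (G, Imp a b :: D)
| i_lw G D a : inst0 RLW [(G, D)] (a :: G, D)
| i_rw G D a : inst0 RRW [(G, D)] (G, a :: D)
| i_E a b : inst0 RE [([a], [b]); ([b], [a])] ([Box a], [Box b])
| i_M a b : inst0 RM [([a], [b])] ([Box a], [Box b])
| i_MC (a : formula) (l : list formula) (b : formula) :
    (* n >= 1 antecedent formulas a :: l *)
    inst0 RMC [(a :: l, [b])] (map Box (a :: l), [Box b])
| i_N b : inst0 RN [([], [b])] ([], [Box b])
| i_CE a0 a1 b0 b1 :
    inst0 RCE [([a0], [a1]); ([a1], [a0]); ([b0], [b1]); ([b1], [b0])]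
              ([Cond a1 b1], [Cond a0 b0])
| i_CM a0 a1 b0 b1 :
    inst0 RCM [([a0], [a1]); ([a1], [a0]); ([b1], [b0])]
              ([Cond a1 b1], [Cond a0 b0])
| i_CMC a0 b0 (c : formula * formula) (l : list (formula * formula)) :
    (* n >= 1 pairs c :: l *)
    inst0 RCMC (equivs a0 (c :: l) ++ [(map snd (c :: l), [b0])])
               (map cnd (c :: l), [Cond a0 b0])
| i_CN a0 b0 : inst0 RCN [([], [b0])] ([], [Cond a0 b0])
| i_CKID a0 b0 (l : list (formula * formula)) :
    inst0 RCKID (equivs a0 l ++ [(a0 :: map snd l, [b0])])
                (map cnd l, [Cond a0 b0])
| i_CKCEM a0 b0 (lI lJ : list (formula * formula)) :
    inst0 RCKCEM (equivs a0 (lI ++ lJ) ++ [(map snd lI, b0 :: map snd lJ)])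
                 (map cnd lI, Cond a0 b0 :: map cnd lJ)
| i_CKCEMID a0 b0 (lI lJ : list (formula * formula)) :
    inst0 RCKCEMID (equivs a0 (lI ++ lJ) ++ [(a0 :: map snd lI, b0 :: map snd lJ)])
                   (map cnd lI, Cond a0 b0 :: map cnd lJ).

Definition inst (r : rule_name) (prems : list sequent) (S : sequent) : Prop :=
  exists S0, inst0 r prems S0 /\ seq_perm S0 S.

Inductive calculus : Type :=
| GE | GM | GMC | GEN | GMN | GK
| GCE | GCM | GCMC | GCEN | GCMN | GCK | GCKID | GCKCEM | GCKCEMID.

Definition g3w_rule (r : rule_name) : Prop :=
  match r with
  | RAx | RAxBot | RLAnd | RRAnd | RLOr | RROr | RLImp | RRImp | RLW | RRW => True
  | _ => False
  end.

Definition modal_rules (G : calculus) (r : rule_name) : Prop :=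
  match G, r with
  | GE, RE | GM, RM | GMC, RMC => True
  | GEN, (RE | RN) | GMN, (RM | RN) | GK, (RMC | RN) => True
  | GCE, RCE | GCM, RCM | GCMC, RCMC => True
  | GCEN, (RCE | RCN) | GCMN, (RCM | RCN) | GCK, (RCMC | RCN) => True
  | GCKID, RCKID | GCKCEM, RCKCEM | GCKCEMID, RCKCEMID => True
  | _, _ => False
  end.

Definition rules (G : calculus) (r : rule_name) : Prop := g3w_rule r \/ modal_rules G r.

Inductive derivable (G : calculus) : sequent -> Prop :=
| der (r : rule_name) (prems : list sequent) (S : sequent) :
    rules G r -> inst r prems S ->
    (forall P, In P prems -> derivable G P) -> derivable G S.

Definition last_in (G : calculus) (R : rule_name -> Prop) (S : sequent) : Prop :=
  exists r prems, rules G r /\ R r /\ inst r prems S /\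
                  (forall P, In P prems -> derivable G P).

Fixpoint noCond (f : formula) : Prop :=
  match f with
  | Var _ | Bot => True
  | And a b | Or a b | Imp a b => noCond a /\ noCond b
  | Box a => noCond a
  | Cond _ _ => False
  end.

Fixpoint noBox (f : formula) : Prop :=
  match f with
  | Var _ | Bot => True
  | And a b | Or a b | Imp a b | Cond a b => noBox a /\ noBox b
  | Box _ => False
  end.

Definition modal_calculus (G : calculus) : bool :=
  match G with GE | GM | GMC | GEN | GMN | GK => true | _ => false end.

Definition inlang (G : calculus) (f : formula) : Prop :=
  if modal_calculus G then noCond f else noBox f.

Definition sinlang (G : calculus) (S : sequent) : Prop :=
  Forall (inlang G) (fst S) /\ Forall (inlang G) (snd S).

Definition ulip_base (G : calculus) (S : sequent) (p : nat) (s : sign)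
  (th : formula) : Prop :=
  inlang G th /\ ~ In p (vars s th) /\
  (forall t, incl (vars t th) (svars t S)) /\
  derivable G (seq_cat S ([th], [])).

Definition ulip_interp_wrt (G : calculus) (R : rule_name -> Prop) (S : sequent)
  (p : nat) (s : sign) (th : formula) : Prop :=
  ulip_base G S p s th /\
  forall Gm Dl, sinlang G (Gm, Dl) -> ~ In p (svars (opp s) (Gm, Dl)) ->
    last_in G R (seq_cat S (Gm, Dl)) -> derivable G (Gm, th :: Dl).

Definition ulip_interp (G : calculus) (S : sequent) (p : nat) (s : sign)
  (th : formula) : Prop :=
  ulip_base G S p s th /\
  forall Gm Dl, sinlang G (Gm, Dl) -> ~ In p (svars (opp s) (Gm, Dl)) ->
    derivable G (seq_cat S (Gm, Dl)) -> derivable G (Gm, th :: Dl).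

Definition ULIP (G : calculus) : Prop :=
  forall S p s, sinlang G S -> exists th, ulip_interp G S p s th.

Definition Ulower (G : calculus) (S : sequent) (p : nat) (s : sign) : Prop :=
  forall T, sinlang G T -> sweight T < sweight S -> exists th, ulip_interp G T p s th.

Definition MULIP (G : calculus) : Prop :=
  forall S p s, sinlang G S ->
    exists th, Ulower G S p s -> ulip_interp_wrt G (modal_rules G) S p s th.

Definition uip_base (G : calculus) (S : sequent) (p : nat) (th : formula) : Prop :=
  inlang G th /\ ~ In p (allvars th) /\
  incl (allvars th) (sallvars S) /\
  derivable G (seq_cat S ([th], [])).

Definition uip_interp_wrt (G : calculus) (R : rule_name -> Prop) (S : sequent)
  (p : nat) (th : formula) : Prop :=
  uip_base G S p th /\
  forall Gm Dl, sinlang G (Gm, Dl) -> ~ In p (sallvars (Gm, Dl)) ->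
    last_in G R (seq_cat S (Gm, Dl)) -> derivable G (Gm, th :: Dl).

Definition uip_interp (G : calculus) (S : sequent) (p : nat) (th : formula) : Prop :=
  uip_base G S p th /\
  forall Gm Dl, sinlang G (Gm, Dl) -> ~ In p (sallvars (Gm, Dl)) ->
    derivable G (seq_cat S (Gm, Dl)) -> derivable G (Gm, th :: Dl).

Definition UIP (G : calculus) : Prop :=
  forall S p, sinlang G S -> exists th, uip_interp G S p th.

Definition Ulower_np (G : calculus) (S : sequent) (p : nat) : Prop :=
  forall T, sinlang G T -> sweight T < sweight S -> exists th, uip_interp G T p th.

Definition MUIP (G : calculus) : Prop :=
  forall S p, sinlang G S ->
    exists th, Ulower_np G S p -> uip_interp_wrt G (modal_rules G) S p th.

(* The uniform interpolant of a sequent S is built by well-founded induction on S (weight, then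
   number of formulas) as the disjunction of candidates, one for each way in which the last
   inference of a derivation of S . (Gamma => Delta) can involve S: the interpolant provided by
   MULIP (resp. MUIP) for a modal or conditional inference; T when S is itself an axiom; an atom
   or a negated atom when an axiom pairs a variable of S with one of the context; and, for every
   G3W rule with principal formula in S, the conjunction of the interpolants of its premises,
   which are lower than S.  G3W inferences whose principal formula lies in the context are
   absorbed by induction on the derivation. *)

From Stdlib Require Import List Permutation Lia Setoid Morphisms Wf_nat.
From Stdlib Require Classical_Prop.
Import ListNotations.

Lemma list_choice {A B} (Q : B -> Prop) (R : A -> B -> Prop) (l : list A) :
  (forall x, In x l -> exists y, Q y /\ R x y) ->
  exists ys, Forall Q ys /\ forall x, In x l -> exists y, In y ys /\ R x y.
Proof.
  induction l as [|x l IH]; intros H; [exists []; split; [constructor | intros _ []] |].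
  destruct (H x (or_introl eq_refl)) as (y & Hy & Hxy).
  destruct IH as (ys & Hys & Hl); [intros; apply H; right; assumption |].
  exists (y :: ys); split; [constructor; assumption |].
  intros x' [<- | Hx']; [exists y; split; [left |] |
    destruct (Hl x' Hx') as (y' & ? & ?); exists y'; split; [right |]]; auto.
Qed.

Definition top : formula := Imp Bot Bot.
Definition neg (a : formula) : formula := Imp a Bot.

#[local] Instance seq_perm_equiv : Equivalence seq_perm.
Proof.
  split.
  - intros X; split; reflexivity.
  - intros X Y [H1 H2]; split; symmetry; assumption.
  - intros X Y Z [H1 H2] [H3 H4]; split; etransitivity; eassumption.
Qed.

#[local] Instance pair_proper : Proper (@Permutation formula ==> @Permutation formula ==> seq_perm) pair.
Proof. intros A A' HA B B' HB; split; assumption. Qed.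

#[local] Instance seq_cat_proper : Proper (seq_perm ==> seq_perm ==> seq_perm) seq_cat.
Proof. intros X X' [H1 H2] Y Y' [H3 H4]; split; apply Permutation_app; assumption. Qed.

Lemma seq_cat_assoc X Y Z : seq_cat (seq_cat X Y) Z = seq_cat X (seq_cat Y Z).
Proof. unfold seq_cat; simpl; rewrite !app_assoc; reflexivity. Qed.

Lemma seq_cat_comm X Y : seq_perm (seq_cat X Y) (seq_cat Y X).
Proof. split; apply Permutation_app_comm. Qed.

Lemma seq_cat_swap X Y Z : seq_perm (seq_cat X (seq_cat Y Z)) (seq_cat Y (seq_cat X Z)).
Proof. rewrite <- !seq_cat_assoc, (seq_cat_comm X Y); reflexivity. Qed.

#[local] Instance inst_proper r prems : Proper (seq_perm ==> iff) (inst r prems).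
Proof.
  enough (H : forall X Y, seq_perm X Y -> inst r prems X -> inst r prems Y)
    by (intros X Y HXY; split; apply H; [| symmetry]; assumption).
  intros X Y HXY (X0 & Hi & HX0); exists X0; split; [assumption | etransitivity; eassumption].
Qed.

#[local] Instance derivable_proper G : Proper (seq_perm ==> iff) (derivable G).
Proof.
  enough (H : forall X Y, seq_perm X Y -> derivable G X -> derivable G Y)
    by (intros X Y HXY; split; apply H; [| symmetry]; assumption).
  intros X Y HXY HX; destruct HX as [r prems X Hr Hi Hprems].
  apply (der G r prems); [assumption | rewrite <- HXY; assumption | assumption].
Qed.

Lemma derivable_rule G r prems X : rules G r -> inst0 r prems X ->
  (forall P, In P prems -> derivable G P) -> derivable G X.
Proof. intros Hr Hi; apply (der G r prems X Hr); exists X; split; [assumption | reflexivity]. Qed.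

Lemma derivable_axiom G n X : In (Var n) (fst X) -> In (Var n) (snd X) -> derivable G X.
Proof.
  destruct X as [A B]; simpl; intros (a1 & a2 & ->)%in_split (b1 & b2 & ->)%in_split.
  rewrite <- !Permutation_middle; apply derivable_rule with RAx []; [left; exact I | constructor | intros _ []].
Qed.

Lemma derivable_bot G X : In Bot (fst X) -> derivable G X.
Proof.
  destruct X as [A B]; simpl; intros (a1 & a2 & ->)%in_split.
  rewrite <- Permutation_middle; apply derivable_rule with RAxBot []; [left; exact I | constructor | intros _ []].
Qed.

(* For a one-formula sequent [C], [premise_sets C] lists the context-free premises of the
   G3W rules with principal part [C]; the weakening rules have the single premise [([], [])]. *)
Definition left_premises (f : formula) : list (list sequent) :=
  [([], [])] :: match f with
  | And a b => [[([a; b], [])]]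
  | Or a b => [[([a], []); ([b], [])]]
  | Imp a b => [[([], [a]); ([b], [])]]
  | _ => []
  end.

Definition right_premises (f : formula) : list (list sequent) :=
  [([], [])] :: match f with
  | And a b => [[([], [a]); ([], [b])]]
  | Or a b => [[([], [a; b])]]
  | Imp a b => [[([a], [b])]]
  | _ => []
  end.

Definition premise_sets (C : sequent) : list (list sequent) :=
  match C with
  | ([f], []) => left_premises f
  | ([], [f]) => right_premises f
  | _ => []
  end.

Ltac premise_cases C HPs :=
  destruct C as [[|? [|]] [|? [|]]]; simpl in HPs; try contradiction;
  match goal with f : formula |- _ => destruct f end; simpl in HPs;
  repeat destruct HPs as [<- | HPs]; try contradiction.

Lemma premise_sets_inst0 C K Ps : In Ps (premise_sets C) ->
  exists r, g3w_rule r /\ inst0 r (map (fun P => seq_cat P K) Ps) (seq_cat C K).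
Proof.
  intros HPs; destruct K; premise_cases C HPs.
  all: eexists; split; [| unfold seq_cat; simpl; constructor]; exact I.
Qed.

Lemma derivable_principal G C K Ps : In Ps (premise_sets C) ->
  (forall P, In P Ps -> derivable G (seq_cat P K)) -> derivable G (seq_cat C K).
Proof.
  intros HPs HP; destruct (premise_sets_inst0 C K Ps HPs) as (r & Hr & Hi).
  apply (derivable_rule G r _ _ (or_introl Hr) Hi); intros Q (P & <- & HinP)%in_map_iff; auto.
Qed.

Definition axiomatic (X : sequent) : Prop :=
  (exists n, In (Var n) (fst X) /\ In (Var n) (snd X)) \/ In Bot (fst X).

Lemma inst0_g3w_cases r prems Z : g3w_rule r -> inst0 r prems Z ->
  axiomatic Z \/ exists C K Ps, In Ps (premise_sets C) /\ Z = seq_cat C K /\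
                                prems = map (fun P => seq_cat P K) Ps.
Proof.
  intros Hr Hi; destruct Hi as [Gm Dl n | Gm Dl | Gm Dl a b | Gm Dl a b | Gm Dl a b | Gm Dl a b
                                | Gm Dl a b | Gm Dl a b | Gm Dl a | Gm Dl a | | | | | | | | | | |];
    simpl in Hr; try contradiction.
  - left; left; exists n; simpl; auto.
  - left; right; simpl; auto.
  - right; exists ([And a b], []), (Gm, Dl), [([a; b], [])]; simpl; auto.
  - right; exists ([], [And a b]), (Gm, Dl), [([], [a]); ([], [b])]; simpl; auto.
  - right; exists ([Or a b], []), (Gm, Dl), [([a], []); ([b], [])]; simpl; auto.
  - right; exists ([], [Or a b]), (Gm, Dl), [([], [a; b])]; simpl; auto.
  - right; exists ([Imp a b], []), (Gm, Dl), [([], [a]); ([b], [])]; simpl; auto.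
  - right; exists ([], [Imp a b]), (Gm, Dl), [([a], [b])]; simpl; auto.
  - right; exists ([a], []), (Gm, Dl), [([], [])]; destruct a; simpl; auto.
  - right; exists ([], [a]), (Gm, Dl), [([], [])]; destruct a; simpl; auto.
Qed.

Lemma derivable_weaken G X Y : derivable G X -> derivable G (seq_cat Y X).
Proof.
  destruct Y as [A B]; intros HX.
  induction A as [|f A IH]; [induction B as [|g B IH] |].
  - destruct X; exact HX.
  - change (derivable G (seq_cat ([], [g]) (seq_cat ([], B) X))).
    apply (derivable_principal G ([], [g]) _ [([], [])]); [destruct g; simpl; auto | intros P [<- | []]; exact IH].
  - change (derivable G (seq_cat ([f], []) (seq_cat (A, B) X))).
    apply (derivable_principal G ([f], []) _ [([], [])]); [destruct f; simpl; auto | intros P [<- | []]; exact IH].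
Qed.

Fixpoint picks {A} (l : list A) : list (A * list A) :=
  match l with
  | [] => []
  | x :: l' => (x, l') :: map (fun p => (fst p, x :: snd p)) (picks l')
  end.

Lemma picks_perm {A} (l : list A) x r : In (x, r) (picks l) -> Permutation l (x :: r).
Proof.
  revert r; induction l as [|y l IH]; intros r H; simpl in H; [contradiction |].
  destruct H as [[= -> ->] | ([x' r'] & [= -> <-] & H)%in_map_iff]; [reflexivity |].
  rewrite (IH _ H); apply perm_swap.
Qed.

Lemma in_picks {A} (l : list A) x : In x l -> exists r, In (x, r) (picks l).
Proof.
  induction l as [|y l IH]; intros H; simpl in *; [contradiction |].
  destruct H as [-> | (r & Hr)%IH]; [eauto |].
  exists (y :: r); right; apply in_map_iff; exists (x, r); auto.
Qed.

Lemma perm_cons_app_split {A} (f : A) k s y : Permutation (f :: k) (s ++ y) ->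
  (exists r, In (f, r) (picks s) /\ Permutation k (r ++ y)) \/
  (exists r, In (f, r) (picks y) /\ Permutation k (s ++ r)).
Proof.
  intros H; assert (Hf : In f (s ++ y)) by (rewrite <- H; left; reflexivity).
  apply in_app_or in Hf as [Hf | Hf]; apply in_picks in Hf as [r Hr]; [left | right];
    exists r; split; auto; apply Permutation_cons_inv with f; rewrite H, (picks_perm _ _ _ Hr).
  - reflexivity.
  - symmetry; apply Permutation_middle.
Qed.

Definition splits (S : sequent) : list (sequent * sequent) :=
  map (fun fr => (([fst fr], []), (snd fr, snd S))) (picks (fst S)) ++
  map (fun fr => (([], [fst fr]), (fst S, snd fr))) (picks (snd S)).

Lemma splits_perm S C K : In (C, K) (splits S) -> seq_perm S (seq_cat C K).
Proof.
  destruct S as [A B]; unfold splits; simpl.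
  intros [H | H]%in_app_or; apply in_map_iff in H as ([f r] & [= <- <-] & Hfr);
    apply picks_perm in Hfr; split; simpl; auto.
Qed.

Lemma premise_sets_single C Ps : In Ps (premise_sets C) -> exists f, C = ([f], []) \/ C = ([], [f]).
Proof. destruct C as [[|f [|]] [|g [|]]]; simpl; try contradiction; eauto. Qed.

Lemma splits_cat C K0 S Y : (exists f, C = ([f], []) \/ C = ([], [f])) ->
  seq_perm (seq_cat C K0) (seq_cat S Y) ->
  (exists K, In (C, K) (splits S) /\ seq_perm K0 (seq_cat K Y)) \/
  (exists K, In (C, K) (splits Y) /\ seq_perm K0 (seq_cat S K)).
Proof.
  destruct K0 as [k1 k2]; intros [f [-> | ->]] [H1 H2]; simpl in H1, H2.
  - destruct (perm_cons_app_split f _ _ _ H1) as [(r & Hr & Hk) | (r & Hr & Hk)];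
      [left; exists (r, snd S) | right; exists (r, snd Y)];
      (split; [unfold splits; apply in_or_app; left; apply in_map_iff; exists (f, r); auto
              | split; assumption]).
  - destruct (perm_cons_app_split f _ _ _ H2) as [(r & Hr & Hk) | (r & Hr & Hk)];
      [left; exists (fst S, r) | right; exists (fst Y, r)];
      (split; [unfold splits; apply in_or_app; right; apply in_map_iff; exists (f, r); auto
              | split; assumption]).
Qed.

Definition slen (S : sequent) : nat := length (fst S) + length (snd S).

Definition lower (T S : sequent) : Prop :=
  sweight T < sweight S \/ (sweight T = sweight S /\ slen T < slen S).

Lemma lower_wf : well_founded lower.
Proof.
  enough (H : forall w l S, sweight S = w -> slen S = l -> Acc lower S) by (intros S; eauto).
  induction w as [w IHw] using lt_wf_ind; induction l as [l IHl] using lt_wf_ind.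
  intros S <- <-; constructor; intros T [Hlt | [Heq Hlt]]; eauto.
Qed.

Lemma lweight_app l m : lweight (l ++ m) = lweight l + lweight m.
Proof. induction l as [|f l IH]; simpl; lia. Qed.

#[local] Instance lweight_proper : Proper (@Permutation formula ==> eq) lweight.
Proof. intros l m H; induction H; simpl; lia. Qed.

Lemma lower_perm T S S' : seq_perm S S' -> lower T S -> lower T S'.
Proof. intros [H1 H2]; unfold lower, sweight, slen; rewrite H1, H2; auto. Qed.

Lemma lower_cat P C K : lower P C -> lower (seq_cat P K) (seq_cat C K).
Proof. unfold lower, sweight, slen, seq_cat; simpl; rewrite !lweight_app, !length_app; lia. Qed.

Lemma premise_lower C Ps P : In Ps (premise_sets C) -> In P Ps -> lower P C.
Proof.
  intros HPs HP; premise_cases C HPs; simpl in HP; repeat destruct HP as [<- | HP]; try contradiction;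
    unfold lower, sweight, slen, lweight; simpl; lia.
Qed.

Definition svars_incl (X Y : sequent) : Prop := forall t, incl (svars t X) (svars t Y).

Lemma in_svars_cat t x X Y : In x (svars t (seq_cat X Y)) <-> In x (svars t X) \/ In x (svars t Y).
Proof. unfold svars, seq_cat; simpl; rewrite !flat_map_app, !in_app_iff; tauto. Qed.

Lemma svars_incl_perm X Y : seq_perm X Y -> svars_incl X Y.
Proof. intros [H1 H2] t x; unfold svars; rewrite H1, H2; auto. Qed.

Lemma svars_incl_cat P C K : svars_incl P C -> svars_incl (seq_cat P K) (seq_cat C K).
Proof. intros H t x; rewrite !in_svars_cat; specialize (H t x); tauto. Qed.

Lemma premise_svars_incl C Ps P : In Ps (premise_sets C) -> In P Ps -> svars_incl P C.
Proof.
  intros HPs HP; premise_cases C HPs; simpl in HP; repeat destruct HP as [<- | HP]; try contradiction;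
    intros [] x; unfold svars; simpl; rewrite ?app_nil_r, ?in_app_iff; tauto.
Qed.

Lemma sinlang_cat G X Y : sinlang G (seq_cat X Y) <-> sinlang G X /\ sinlang G Y.
Proof. unfold sinlang, seq_cat; simpl; rewrite !Forall_app; tauto. Qed.

Lemma sinlang_perm G X Y : seq_perm X Y -> sinlang G X -> sinlang G Y.
Proof. intros [H1 H2] [HX1 HX2]; split; [rewrite <- H1 | rewrite <- H2]; assumption. Qed.

Lemma inlang_And G a b : inlang G (And a b) <-> inlang G a /\ inlang G b.
Proof. unfold inlang; destruct (modal_calculus G); simpl; tauto. Qed.

Lemma inlang_Or G a b : inlang G (Or a b) <-> inlang G a /\ inlang G b.
Proof. unfold inlang; destruct (modal_calculus G); simpl; tauto. Qed.

Lemma inlang_Imp G a b : inlang G (Imp a b) <-> inlang G a /\ inlang G b.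
Proof. unfold inlang; destruct (modal_calculus G); simpl; tauto. Qed.

Lemma inlang_Var G n : inlang G (Var n).
Proof. unfold inlang; destruct (modal_calculus G); simpl; tauto. Qed.

Lemma inlang_Bot G : inlang G Bot.
Proof. unfold inlang; destruct (modal_calculus G); simpl; tauto. Qed.

Lemma premise_sinlang G C Ps P : In Ps (premise_sets C) -> In P Ps -> sinlang G C -> sinlang G P.
Proof.
  intros HPs HP; premise_cases C HPs; simpl in HP; repeat destruct HP as [<- | HP]; try contradiction;
    intros [H1 H2]; inversion H1; inversion H2; subst;
    rewrite ?inlang_And, ?inlang_Or, ?inlang_Imp in *; split; simpl; repeat constructor; tauto.
Qed.

(* A decomposition [(K, Ps)] of [S] is a G3W inference read backwards whose principal formula
   lies in [S]: [S] is [C . K] for a principal part [C] with premises [Ps]. *)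
Definition decompositions (S : sequent) : list (sequent * list sequent) :=
  flat_map (fun CK => map (pair (snd CK)) (premise_sets (fst CK))) (splits S).

Lemma in_decompositions S K Ps :
  In (K, Ps) (decompositions S) <-> exists C, In (C, K) (splits S) /\ In Ps (premise_sets C).
Proof.
  unfold decompositions; rewrite in_flat_map; split.
  - intros ([C K'] & HCK & (Ps' & [= <- <-] & HPs)%in_map_iff); eauto.
  - intros (C & HCK & HPs); exists (C, K); split; [| apply in_map_iff; exists Ps]; auto.
Qed.

Section Decomposition.
Variables (S K : sequent) (Ps : list sequent).
Hypothesis HKPs : In (K, Ps) (decompositions S).

Lemma decomposition_lower P : In P Ps -> lower (seq_cat P K) S.
Proof.
  apply in_decompositions in HKPs as (C & HCK & HPs); intros HP.
  eapply lower_perm; [symmetry; apply splits_perm, HCK | apply lower_cat, (premise_lower C Ps); auto].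
Qed.

Lemma decomposition_svars_incl P : In P Ps -> svars_incl (seq_cat P K) S.
Proof.
  apply in_decompositions in HKPs as (C & HCK & HPs); intros HP t x Hx.
  apply (svars_incl_perm _ _ (symmetry (splits_perm _ _ _ HCK))).
  apply (svars_incl_cat P C K (premise_svars_incl C Ps P HPs HP)), Hx.
Qed.

Lemma decomposition_sinlang G P : In P Ps -> sinlang G S -> sinlang G (seq_cat P K).
Proof.
  apply in_decompositions in HKPs as (C & HCK & HPs); intros HP HS.
  apply (sinlang_perm G _ _ (splits_perm _ _ _ HCK)), sinlang_cat in HS as [HC HK].
  apply sinlang_cat; split; [apply (premise_sinlang G C Ps) |]; assumption.
Qed.

Lemma derivable_decomposition G Y :
  (forall P, In P Ps -> derivable G (seq_cat (seq_cat P K) Y)) -> derivable G (seq_cat S Y).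
Proof.
  apply in_decompositions in HKPs as (C & HCK & HPs); intros HP.
  rewrite (splits_perm _ _ _ HCK), seq_cat_assoc.
  apply (derivable_principal G C _ Ps HPs); intros P HinP; rewrite <- seq_cat_assoc; auto.
Qed.

End Decomposition.

Lemma g3w_inference_cases r prems S Y : g3w_rule r -> inst r prems (seq_cat S Y) ->
  axiomatic (seq_cat S Y) \/
  (exists K Ps, In (K, Ps) (decompositions S) /\
     forall P, In P Ps -> exists Z, In Z prems /\ seq_perm Z (seq_cat (seq_cat P K) Y)) \/
  (exists K Ps, In (K, Ps) (decompositions Y) /\
     forall P, In P Ps -> exists Z, In Z prems /\ seq_perm Z (seq_cat S (seq_cat P K))).
Proof.
  intros Hr (Z & Hi & HZ).
  destruct (inst0_g3w_cases r prems Z Hr Hi) as [Hax | (C & K0 & Ps & HPs & -> & ->)].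
  - left; destruct HZ as [H1 H2], Hax as [(n & Hl & Hr') | Hb]; [left; exists n | right];
      rewrite <- ?H1, <- ?H2; auto.
  - right; destruct (splits_cat C K0 S Y (premise_sets_single C Ps HPs) HZ)
      as [(K & HK & HK0) | (K & HK & HK0)];
      [left | right]; exists K, Ps; (split; [apply in_decompositions; eauto |]);
      intros P HP; exists (seq_cat P K0); (split; [apply in_map_iff; eauto |]); rewrite HK0.
    + rewrite seq_cat_assoc; reflexivity.
    + apply seq_cat_swap.
Qed.

Definition bigOr (L : list formula) : formula := fold_right Or Bot L.
Definition bigAnd (L : list formula) : formula := fold_right And top L.

Section BigConnectives.
Variable G : calculus.

Lemma derivable_top X : derivable G (seq_cat ([], [top]) X).
Proof.
  apply (derivable_principal G ([], [Imp Bot Bot]) _ [([Bot], [Bot])]); [simpl; auto |].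
  intros P [<- | []]; apply derivable_bot; simpl; auto.
Qed.

Lemma derivable_bigOr_r L th X : In th L ->
  derivable G (seq_cat ([], [th]) X) -> derivable G (seq_cat ([], [bigOr L]) X).
Proof.
  induction L as [|c L IH]; intros Hin Hth; [contradiction |].
  apply (derivable_principal G ([], [Or c (bigOr L)]) _ [([], [c; bigOr L])]); [simpl; auto |].
  intros P [<- | []]; change (derivable G (seq_cat ([], [c]) (seq_cat ([], [bigOr L]) X))).
  destruct Hin as [-> | Hin]; [rewrite seq_cat_swap |]; apply derivable_weaken; auto.
Qed.

Lemma derivable_bigOr_l L X : (forall th, In th L -> derivable G (seq_cat ([th], []) X)) ->
  derivable G (seq_cat ([bigOr L], []) X).
Proof.
  induction L as [|c L IH]; intros HL; [apply derivable_bot; simpl; auto |].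
  apply (derivable_principal G ([Or c (bigOr L)], []) _ [([c], []); ([bigOr L], [])]); [simpl; auto |].
  intros P [<- | [<- | []]]; [apply HL; left | apply IH; intros th Hth; apply HL; right]; auto.
Qed.

Lemma derivable_bigAnd_r L X : (forall th, In th L -> derivable G (seq_cat ([], [th]) X)) ->
  derivable G (seq_cat ([], [bigAnd L]) X).
Proof.
  induction L as [|c L IH]; intros HL; [apply derivable_top |].
  apply (derivable_principal G ([], [And c (bigAnd L)]) _ [([], [c]); ([], [bigAnd L])]); [simpl; auto |].
  intros P [<- | [<- | []]]; [apply HL; left | apply IH; intros th Hth; apply HL; right]; auto.
Qed.

Lemma derivable_bigAnd_l L X : derivable G (seq_cat (L, []) X) -> derivable G (seq_cat ([bigAnd L], []) X).
Proof.
  revert X; induction L as [|c L IH]; intros X HL.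
  - apply derivable_weaken; destruct X; exact HL.
  - apply (derivable_principal G ([And c (bigAnd L)], []) _ [([c; bigAnd L], [])]); [simpl; auto |].
    intros P [<- | []]; change (derivable G (seq_cat ([c], []) (seq_cat ([bigAnd L], []) X))).
    rewrite seq_cat_swap; apply IH; rewrite seq_cat_swap; exact HL.
Qed.

End BigConnectives.

(* The side conditions of uniform (Lyndon) interpolation, abstracted: [cond_free th] is the
   freeness of the interpolant in [p] (with the relevant polarity), [cond_vars th S] the variable
   inclusion between [th] and [S], and [cond_context X] the restriction on the contexts
   [Gamma => Delta]. *)
Record interpolation_condition : Type := {
  cond_free : formula -> Prop;
  cond_vars : formula -> sequent -> Prop;
  cond_context : sequent -> Prop }.

Record condition_laws (c : interpolation_condition) : Prop := {
  free_Bot : cond_free c Bot;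
  free_top : cond_free c top;
  free_And a b : cond_free c a -> cond_free c b -> cond_free c (And a b);
  free_Or a b : cond_free c a -> cond_free c b -> cond_free c (Or a b);
  free_Var n X : In (Var n) (fst X) -> cond_context c X -> cond_free c (Var n);
  free_neg n X : In (Var n) (snd X) -> cond_context c X -> cond_free c (neg (Var n));
  vars_Bot S : cond_vars c Bot S;
  vars_top S : cond_vars c top S;
  vars_And a b S : cond_vars c a S -> cond_vars c b S -> cond_vars c (And a b) S;
  vars_Or a b S : cond_vars c a S -> cond_vars c b S -> cond_vars c (Or a b) S;
  vars_Var n S : In (Var n) (snd S) -> cond_vars c (Var n) S;
  vars_neg n S : In (Var n) (fst S) -> cond_vars c (neg (Var n)) S;
  vars_incl th S T : svars_incl S T -> cond_vars c th S -> cond_vars c th T;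
  context_incl X Y : svars_incl X Y -> cond_context c Y -> cond_context c X }.

Section UniformInterpolation.
Variables (G : calculus) (c : interpolation_condition).
Hypothesis laws : condition_laws c.

(* Laid out so that, for the two conditions instantiated below, [interpolant] and
   [modal_interpolant] are convertible to [ulip_interp] and [ulip_interp_wrt] (resp. [uip_interp]
   and [uip_interp_wrt]). *)
Definition interpolant_base (S : sequent) (th : formula) : Prop :=
  inlang G th /\ cond_free c th /\ cond_vars c th S /\ derivable G (seq_cat S ([th], [])).

Definition interpolant (S : sequent) (th : formula) : Prop :=
  interpolant_base S th /\
  forall Gm Dl, sinlang G (Gm, Dl) -> cond_context c (Gm, Dl) ->
    derivable G (seq_cat S (Gm, Dl)) -> derivable G (Gm, th :: Dl).

Definition modal_interpolant (S : sequent) (th : formula) : Prop :=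
  interpolant_base S th /\
  forall Gm Dl, sinlang G (Gm, Dl) -> cond_context c (Gm, Dl) ->
    last_in G (modal_rules G) (seq_cat S (Gm, Dl)) -> derivable G (Gm, th :: Dl).

Definition allowed_context (X : sequent) : Prop := sinlang G X /\ cond_context c X.

Definition meets_conditions (S : sequent) (th : formula) : Prop :=
  inlang G th /\ cond_free c th /\ cond_vars c th S.

Lemma interpolant_base_intro S th : meets_conditions S th -> derivable G (seq_cat ([th], []) S) ->
  interpolant_base S th.
Proof. intros (? & ? & ?) Hder; rewrite seq_cat_comm in Hder; repeat split; assumption. Qed.

Lemma interpolant_elim S th X : interpolant S th -> allowed_context X -> derivable G (seq_cat S X) ->
  derivable G (seq_cat ([], [th]) X).
Proof. destruct X; intros [_ H] [? ?]; apply H; assumption. Qed.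

Lemma meets_conditions_incl S T th : svars_incl S T -> meets_conditions S th -> meets_conditions T th.
Proof. intros HST (? & ? & ?); repeat split; try apply (vars_incl _ laws) with S; assumption. Qed.

Lemma meets_conditions_Bot S : meets_conditions S Bot.
Proof. split; [apply inlang_Bot | split; [apply (free_Bot _ laws) | apply (vars_Bot _ laws)]]. Qed.

Lemma meets_conditions_top S : meets_conditions S top.
Proof.
  split; [apply inlang_Imp; split; apply inlang_Bot | split; [apply (free_top _ laws) | apply (vars_top _ laws)]].
Qed.

Lemma meets_conditions_bigAnd S L : (forall th, In th L -> meets_conditions S th) ->
  meets_conditions S (bigAnd L).
Proof.
  induction L as [|a L IH]; intros HL; [apply meets_conditions_top |].
  destruct (HL a (or_introl eq_refl)) as (? & ? & ?), IH as (? & ? & ?); [intros; apply HL; right; assumption |].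
  split; [apply inlang_And; split | split; [apply (free_And _ laws) | apply (vars_And _ laws)]]; assumption.
Qed.

Lemma meets_conditions_bigOr S L : (forall th, In th L -> meets_conditions S th) ->
  meets_conditions S (bigOr L).
Proof.
  induction L as [|a L IH]; intros HL; [apply meets_conditions_Bot |].
  destruct (HL a (or_introl eq_refl)) as (? & ? & ?), IH as (? & ? & ?); [intros; apply HL; right; assumption |].
  split; [apply inlang_Or; split | split; [apply (free_Or _ laws) | apply (vars_Or _ laws)]]; assumption.
Qed.

Lemma interpolant_base_Bot S : interpolant_base S Bot.
Proof. apply interpolant_base_intro; [apply meets_conditions_Bot | apply derivable_bot; simpl; auto]. Qed.

Lemma interpolant_base_bigOr S L : Forall (interpolant_base S) L -> interpolant_base S (bigOr L).
Proof.
  rewrite Forall_forall; intros HL; apply interpolant_base_intro.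
  - apply meets_conditions_bigOr; intros th Hth; destruct (HL th Hth) as (? & ? & ? & _); repeat split; assumption.
  - apply derivable_bigOr_l; intros th Hth; destruct (HL th Hth) as (_ & _ & _ & Hder).
    rewrite seq_cat_comm; exact Hder.
Qed.

Lemma interpolant_by_cases S th :
  (forall X, allowed_context X -> last_in G (modal_rules G) (seq_cat S X) ->
     derivable G (seq_cat ([], [th]) X)) ->
  (forall X K Ps, allowed_context X -> In (K, Ps) (decompositions S) ->
     (forall P, In P Ps -> derivable G (seq_cat (seq_cat P K) X)) -> derivable G (seq_cat ([], [th]) X)) ->
  (axiomatic S -> forall X, derivable G (seq_cat ([], [th]) X)) ->
  (forall X n, allowed_context X -> In (Var n) (fst S) -> In (Var n) (snd X) ->
     derivable G (seq_cat ([], [th]) X)) ->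
  (forall X n, allowed_context X -> In (Var n) (snd S) -> In (Var n) (fst X) ->
     derivable G (seq_cat ([], [th]) X)) ->
  forall X, allowed_context X -> derivable G (seq_cat S X) -> derivable G (seq_cat ([], [th]) X).
Proof.
  intros Hmod Hdec Hax Hneg Hpos.
  enough (H : forall Z, derivable G Z -> forall X, seq_perm Z (seq_cat S X) -> allowed_context X ->
                derivable G (seq_cat ([], [th]) X))
    by (intros X HX HZ; exact (H _ HZ X (reflexivity _) HX)).
  induction 1 as [r prems Z Hr Hinst Hprems IH]; intros X HZ HX; rewrite HZ in Hinst.
  destruct Hr as [Hr | Hr]; [| apply Hmod; [| exists r, prems; repeat split; try right]; assumption].
  destruct (g3w_inference_cases r prems S X Hr Hinst)
    as [[(n & Hl & Hr') | Hb] | [(K & Ps & HKPs & HP) | (K & Ps & HKPs & HP)]].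
  - simpl in Hl, Hr'; apply in_app_or in Hl as [Hl | Hl]; apply in_app_or in Hr' as [Hr' | Hr'].
    + apply Hax; left; eauto.
    + eapply Hneg; eauto.
    + eapply Hpos; eauto.
    + apply derivable_axiom with n; simpl; auto.
  - simpl in Hb; apply in_app_or in Hb as [Hb | Hb]; [apply Hax; right; assumption |].
    apply derivable_bot; simpl; assumption.
  - apply (Hdec X K Ps HX HKPs); intros P HinP.
    destruct (HP P HinP) as (Z' & HZ' & Hperm); rewrite <- Hperm; auto.
  - rewrite seq_cat_comm; apply (derivable_decomposition X K Ps HKPs G); intros P HinP.
    destruct (HP P HinP) as (Z' & HZ' & Hperm); rewrite seq_cat_comm; apply (IH Z' HZ' _ Hperm); split.
    + apply decomposition_sinlang with X Ps; [| | apply HX]; assumption.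
    + apply (context_incl _ laws) with X; [apply decomposition_svars_incl with Ps | apply HX]; assumption.
Qed.

Lemma axiom_candidate S :
  exists th, interpolant_base S th /\ (axiomatic S -> forall X, derivable G (seq_cat ([], [th]) X)).
Proof.
  destruct (Classical_Prop.classic (axiomatic S)) as [Hax | Hnax]; [exists top | exists Bot].
  - split; [apply interpolant_base_intro | intros _ X; apply derivable_top].
    + apply meets_conditions_top.
    + destruct Hax as [(n & Hl & Hr) | Hb]; [apply derivable_axiom with n | apply derivable_bot]; simpl; auto.
  - split; [apply interpolant_base_Bot | contradiction].
Qed.

(* A literal that is not free cannot meet an atom of an allowed context, so [Bot] then serves. *)
Lemma negative_literal_candidate S f : In f (fst S) ->
  exists th, interpolant_base S th /\
    forall X n, f = Var n -> allowed_context X -> In (Var n) (snd X) -> derivable G (seq_cat ([], [th]) X).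
Proof.
  intros Hf; destruct (Classical_Prop.classic (exists n, f = Var n /\ cond_free c (neg (Var n))))
    as [(n & -> & Hfree) | Hno].
  - exists (neg (Var n)); split.
    + apply interpolant_base_intro.
      * split; [apply inlang_Imp; split; [apply inlang_Var | apply inlang_Bot] |].
        split; [| apply (vars_neg _ laws)]; assumption.
      * apply (derivable_principal G ([Imp (Var n) Bot], []) _ [([], [Var n]); ([Bot], [])]); [simpl; auto |].
        intros P [<- | [<- | []]]; [apply derivable_axiom with n | apply derivable_bot]; simpl; auto.
    + intros X m [= <-] HX Hm.
      apply (derivable_principal G ([], [Imp (Var n) Bot]) _ [([Var n], [Bot])]); [simpl; auto |].
      intros P [<- | []]; apply derivable_axiom with n; simpl; auto.
  - exists Bot; split; [apply interpolant_base_Bot |].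
    intros X n -> HX Hn; exfalso; apply Hno; exists n; split; [reflexivity |].
    apply (free_neg _ laws) with X; [| apply HX]; assumption.
Qed.

Lemma positive_literal_candidate S f : In f (snd S) ->
  exists th, interpolant_base S th /\
    forall X n, f = Var n -> allowed_context X -> In (Var n) (fst X) -> derivable G (seq_cat ([], [th]) X).
Proof.
  intros Hf; destruct (Classical_Prop.classic (exists n, f = Var n /\ cond_free c (Var n)))
    as [(n & -> & Hfree) | Hno].
  - exists (Var n); split.
    + apply interpolant_base_intro; [split; [apply inlang_Var | split; [| apply (vars_Var _ laws)]] |];
        [| | apply derivable_axiom with n; simpl]; auto.
    + intros X m [= <-] HX Hm; apply derivable_axiom with n; simpl; auto.
  - exists Bot; split; [apply interpolant_base_Bot |].
    intros X n -> HX Hn; exfalso; apply Hno; exists n; split; [reflexivity |].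
    apply (free_Var _ laws) with X; [| apply HX]; assumption.
Qed.

Lemma decomposition_candidate S K Ps :
  (forall T, sinlang G T -> lower T S -> exists th, interpolant T th) ->
  sinlang G S -> In (K, Ps) (decompositions S) ->
  exists th, interpolant_base S th /\
    forall X, allowed_context X -> (forall P, In P Ps -> derivable G (seq_cat (seq_cat P K) X)) ->
      derivable G (seq_cat ([], [th]) X).
Proof.
  intros IH HS HKPs.
  destruct (list_choice (fun th => exists P, In P Ps /\ interpolant (seq_cat P K) th)
                        (fun P th => interpolant (seq_cat P K) th) Ps) as (L & HL & HPL).
  { intros P HP; destruct (IH (seq_cat P K)) as [th Hth];
      [apply decomposition_sinlang with S Ps | apply decomposition_lower with Ps | exists th]; eauto. }
  rewrite Forall_forall in HL; exists (bigAnd L); split.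
  - apply interpolant_base_intro.
    + apply meets_conditions_bigAnd; intros th Hth; destruct (HL th Hth) as (P & HP & [(? & ? & ? & _) _]).
      apply meets_conditions_incl with (seq_cat P K); [apply decomposition_svars_incl with Ps | repeat split];
        assumption.
    + apply derivable_bigAnd_l; rewrite seq_cat_comm; apply (derivable_decomposition S K Ps HKPs G).
      intros P HP; destruct (HPL P HP) as (th & (l1 & l2 & ->)%in_split & [(_ & _ & _ & Hder) _]).
      rewrite <- Permutation_middle.
      change (derivable G (seq_cat (seq_cat P K) (seq_cat ([th], []) (l1 ++ l2, [])))).
      rewrite <- seq_cat_assoc, seq_cat_comm; apply derivable_weaken; exact Hder.
  - intros X HX HP; apply derivable_bigAnd_r; intros th Hth.
    destruct (HL th Hth) as (P & HinP & Hint); apply interpolant_elim with (seq_cat P K); auto.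
Qed.

Lemma interpolant_step S : sinlang G S ->
  (forall T, sinlang G T -> lower T S -> exists th, interpolant T th) ->
  (exists th, modal_interpolant S th) -> exists th, interpolant S th.
Proof.
  intros HS IH [thM [HbM HM]].
  destruct (axiom_candidate S) as (thA & HbA & HA).
  destruct (list_choice (interpolant_base S) (fun f th => forall X n, f = Var n -> allowed_context X ->
              In (Var n) (snd X) -> derivable G (seq_cat ([], [th]) X)) (fst S)) as (Ln & HLn & HnL);
    [apply negative_literal_candidate |].
  destruct (list_choice (interpolant_base S) (fun f th => forall X n, f = Var n -> allowed_context X ->
              In (Var n) (fst X) -> derivable G (seq_cat ([], [th]) X)) (snd S)) as (Lp & HLp & HpL);
    [apply positive_literal_candidate |].
  destruct (list_choice (interpolant_base S) (fun KPs th => forall X, allowed_context X ->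
              (forall P, In P (snd KPs) -> derivable G (seq_cat (seq_cat P (fst KPs)) X)) ->
              derivable G (seq_cat ([], [th]) X)) (decompositions S)) as (Ld & HLd & HdL);
    [intros [K Ps] HKPs; apply decomposition_candidate; assumption |].
  exists (bigOr (thM :: thA :: Ln ++ Lp ++ Ld)); split.
  - apply interpolant_base_bigOr; do 2 (apply Forall_cons; [assumption |]); rewrite !Forall_app; auto.
  - intros Gm Dl HGD Hctx HD; apply (interpolant_by_cases S) with (X := (Gm, Dl)); [| | | | | split | ]; auto.
    + intros [g d] HX Hl; apply derivable_bigOr_r with thM; [left | apply HM; try apply HX]; auto.
    + intros X K Ps HX HKPs HP; destruct (HdL _ HKPs) as (th & Hin & Hth).
      apply derivable_bigOr_r with th; [simpl; rewrite !in_app_iff | apply Hth]; auto.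
    + intros Hax X; apply derivable_bigOr_r with thA; simpl; auto.
    + intros X n HX Hn HnX; destruct (HnL _ Hn) as (th & Hin & Hth).
      apply derivable_bigOr_r with th; [simpl; rewrite !in_app_iff | eapply Hth]; eauto.
    + intros X n HX Hn HnX; destruct (HpL _ Hn) as (th & Hin & Hth).
      apply derivable_bigOr_r with th; [simpl; rewrite !in_app_iff | eapply Hth]; eauto.
Qed.

Theorem interpolation_of_modal_interpolation :
  (forall S, sinlang G S -> exists th,
     (forall T, sinlang G T -> sweight T < sweight S -> exists th', interpolant T th') ->
     modal_interpolant S th) ->
  forall S, sinlang G S -> exists th, interpolant S th.
Proof.
  intros HM S; induction S as [S IH] using (well_founded_induction lower_wf); intros HS.
  apply interpolant_step; [exact HS | intros T HT Hlt; apply IH; assumption |].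
  destruct (HM S HS) as [th Hth]; exists th; apply Hth; intros T HT Hlt; apply IH; [left |]; assumption.
Qed.

End UniformInterpolation.

Lemma svars_Var_l n X : In (Var n) (fst X) -> In n (svars Neg X).
Proof. intros H; apply in_or_app; left; apply in_flat_map; exists (Var n); simpl; auto. Qed.

Lemma svars_Var_r n X : In (Var n) (snd X) -> In n (svars Pos X).
Proof. intros H; apply in_or_app; right; apply in_flat_map; exists (Var n); simpl; auto. Qed.

Definition lyndon_condition (p : nat) (s : sign) : interpolation_condition := {|
  cond_free th := ~ In p (vars s th);
  cond_vars th S := forall t, incl (vars t th) (svars t S);
  cond_context X := ~ In p (svars (opp s) X) |}.

Lemma lyndon_condition_laws p s : condition_laws (lyndon_condition p s).
Proof.
  constructor; simpl.
  - auto.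
  - destruct s; simpl; auto.
  - intros a b Ha Hb; rewrite in_app_iff; tauto.
  - intros a b Ha Hb; rewrite in_app_iff; tauto.
  - intros n X Hn HX; destruct s; simpl; [intros [<- | []]; apply HX, svars_Var_l | tauto]; assumption.
  - intros n X Hn HX; destruct s; simpl; [tauto | intros [<- | []]; apply HX, svars_Var_r]; assumption.
  - intros S t x [].
  - intros S [] x [].
  - intros a b S Ha Hb t; apply incl_app; auto.
  - intros a b S Ha Hb t; apply incl_app; auto.
  - intros n S Hn [] x; simpl; [intros [<- | []]; apply svars_Var_r; assumption | intros []].
  - intros n S Hn [] x; simpl; [intros [] | intros [<- | []]; apply svars_Var_l; assumption].
  - intros th S T HST Hth t; eapply incl_tran; eauto.
  - intros X Y HXY HY Hp; apply HY, HXY, Hp.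
Qed.

Definition plain_condition (p : nat) : interpolation_condition := {|
  cond_free th := ~ In p (allvars th);
  cond_vars th S := incl (allvars th) (sallvars S);
  cond_context X := ~ In p (sallvars X) |}.

Lemma plain_condition_laws p : condition_laws (plain_condition p).
Proof.
  constructor; simpl; unfold allvars, sallvars; simpl; rewrite ?app_nil_r.
  - auto.
  - auto.
  - intros a b Ha Hb; rewrite !in_app_iff in *; tauto.
  - intros a b Ha Hb; rewrite !in_app_iff in *; tauto.
  - intros n X Hn HX [<- | []]; apply HX, in_or_app; right; apply svars_Var_l; assumption.
  - intros n X Hn HX [<- | []]; apply HX, in_or_app; left; apply svars_Var_r; assumption.
  - intros S x [].
  - intros S x [].
  - intros a b S Ha Hb x Hx; rewrite !in_app_iff in Hx.
    destruct Hx as [[Hx | Hx] | [Hx | Hx]]; [apply Ha | apply Hb | apply Ha | apply Hb]; apply in_app_iff; auto.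
  - intros a b S Ha Hb x Hx; rewrite !in_app_iff in Hx.
    destruct Hx as [[Hx | Hx] | [Hx | Hx]]; [apply Ha | apply Hb | apply Ha | apply Hb]; apply in_app_iff; auto.
  - intros n S Hn x [<- | []]; apply in_or_app; left; apply svars_Var_r; assumption.
  - intros n S Hn x [<- | []]; apply in_or_app; right; apply svars_Var_l; assumption.
  - intros th S T HST Hth x Hx; apply Hth, in_app_or in Hx as [Hx | Hx];
      apply in_or_app; [left | right]; apply HST, Hx.
  - intros X Y HXY HY Hp; apply HY; apply in_app_or in Hp as [Hp | Hp];
      apply in_or_app; [left | right]; apply HXY, Hp.
Qed.

Theorem mainTheorem6 (G : calculus) :
  (MULIP G -> ULIP G) /\ (MUIP G -> UIP G).
Proof.
  split.
  - intros HM S p s.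
    exact (interpolation_of_modal_interpolation G _ (lyndon_condition_laws p s) (fun S' => HM S' p s) S).
  - intros HM S p.
    exact (interpolation_of_modal_interpolation G _ (plain_condition_laws p) (fun S' => HM S' p) S).
Qed.
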